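(* For the modular data of the quantum double of $S_3$, the modular invariants $Z_{(21)},Z_{(61)},Z_{(3)},Z_{(4)},Z_{(1)},Z_{(12)},Z_{(2)},Z_{(16)}$ are nimless.
   Context: Primaries $0,\dots,7$, all self-conjugate, with $S=\frac16\begin{pmatrix}1&1&2&2&2&2&3&3\\1&1&2&2&2&2&-3&-3\\2&2&4&-2&-2&-2&0&0\\2&2&-2&4&-2&-2&0&0\\2&2&-2&-2&-2&4&0&0\\2&2&-2&-2&4&-2&0&0\\3&-3&0&0&0&0&3&-3\\3&-3&0&0&0&0&-3&3\end{pmatrix}$, $T=\mathrm{diag}(1,1,1,1,e^{2\pi i/3},e^{4\pi i/3},1,-1)$, fusion coefficients $N_{\lambda\mu}^\nu=\sum_\rho S_{\lambda\rho}S_{\mu\rho}\overline{S_{\nu\rho}}/S_{0\rho}$. Matrices are written as $\sum Z_{\lambda\mu}\chi_\lambda\chi_\mu^*$ (products of linear forms $st^*$ meaning the matrix of products of coefficients). $Z_{(1)}=|\chi_0+\chi_1+\chi_3|^2+\chi_2\chi_3^*+\chi_3\chi_2^*+|\chi_3|^2+|\chi_4|^2+|\chi_5|^2$; $Z_{(2)}=|\chi_0+\chi_1+\chi_3|^2+|\chi_2|^2+2|\chi_3|^2+|\chi_4|^2+|\chi_5|^2$; $Z_{(3)}=|\chi_0+\chi_1+\chi_2|^2+|\chi_2|^2+\chi_2\chi_3^*+\chi_3\chi_2^*+|\chi_4|^2+|\chi_5|^2$; $Z_{(4)}=|\chi_0+\chi_1+\chi_2|^2+2|\chi_2|^2+|\chi_3|^2+|\chi_4|^2+|\chi_5|^2$;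 $Z_{(21)}=(\chi_0+\chi_1+\chi_3)(\chi_0+\chi_1+\chi_2)^*+2\chi_3\chi_2^*+\chi_2\chi_3^*+|\chi_4|^2+|\chi_5|^2$, $Z_{(12)}=Z_{(21)}^t$; $Z_{(61)}=(\chi_0+\chi_1+\chi_3)(\chi_0+\chi_1+\chi_2)^*+\chi_3\chi_2^*+\chi_2\chi_2^*+|\chi_3|^2+|\chi_4|^2+|\chi_5|^2$, $Z_{(16)}=Z_{(61)}^t$. A nimrep of dimension $n$: non-negative integer $n\times n$ matrices $G_\lambda$ with $G_0=I$, $G_{\bar\lambda}=G_\lambda^t$, $G_\lambda G_\mu=\sum_\nu N_{\lambda\mu}^\nu G_\nu$. $\mathrm{Exp}(Z)$ is the multiset with $Z_{\mu\mu}$ copies of $\mu$. A nimrep matches $Z$ if $n=\mathrm{Tr}\,Z$ and the $G_\lambda$ are simultaneously unitarily diagonalisable with joint eigenvalues $(S_{\lambda\mu}/S_{0\mu})_\lambda$, $\mu$ running through $\mathrm{Exp}(Z)$ with multiplicity. $Z$ is nimless if no matching nimrep exists. *)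

From HB Require Import structures.
From mathcomp Require Import all_boot all_order all_algebra.
Set Implicit Arguments.
Unset Strict Implicit.
Unset Printing Implicit Defensive.
Import Order.TTheory GRing.Theory Num.Theory.
Local Open Scope ring_scope.

(* 6 * S *)
Definition S6_table : seq (seq int) :=
  [:: [:: 1; 1; 2; 2; 2; 2; 3; 3];
      [:: 1; 1; 2; 2; 2; 2; -3; -3];
      [:: 2; 2; 4; -2; -2; -2; 0; 0];
      [:: 2; 2; -2; 4; -2; -2; 0; 0];
      [:: 2; 2; -2; -2; -2; 4; 0; 0];
      [:: 2; 2; -2; -2; 4; -2; 0; 0];
      [:: 3; -3; 0; 0; 0; 0; 3; -3];
      [:: 3; -3; 0; 0; 0; 0; -3; 3]]%Z.

Definition Smat (i j : 'I_8) : rat :=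
  (nth 0 (nth [::] S6_table i) j)%:~R / 6%:R.

Definition zero8 : 'I_8 := ord0.

(* Fusion coefficients N_{lam mu}^nu = sum_rho S_{lam rho} S_{mu rho} conj(S_{nu rho}) / S_{0 rho}
   (S is real, so conjugation is the identity). *)
Definition fusN (lam mu nu : 'I_8) : rat :=
  \sum_(rho < 8) Smat lam rho * Smat mu rho * Smat nu rho / Smat zero8 rho.

Definition conjP (lam : 'I_8) : 'I_8 := lam.

Definition is_nimrep (n : nat) (G : 'I_8 -> 'M[int]_n) : Prop :=
  [/\ (forall lam i j, 0 <= G lam i j),
      G zero8 = 1%:M,
      (forall lam, G (conjP lam) = (G lam)^T) &
      (forall lam mu,
          map_mx intr (G lam *m G mu) =
          \sum_(nu < 8) fusN lam mu nu *: map_mx (intr : int -> rat) (G nu))].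

Definition modinv := 'I_8 -> 'I_8 -> nat.

Definition trZ (Z : modinv) : nat := (\sum_(i < 8) Z i i)%N.

(* Matching: with n = Tr Z, there is a unitary U over the (algebraically closed)
   complex field C and an enumeration e of Exp(Z) with multiplicity (mu occurs
   Z_{mu mu} times), such that U G_lam U^* = diag(S_{lam,e i}/S_{0,e i})_i. *)
Definition matches (C : numClosedFieldType) (Z : modinv)
    (G : 'I_8 -> 'M[int]_(trZ Z)) : Prop :=
  exists (e : 'I_(trZ Z) -> 'I_8),
    (forall mu, #|[pred i | e i == mu]| = Z mu mu) /\
    exists U : 'M[C]_(trZ Z),
      U *m (map_mx Num.conj U)^T = 1%:M /\
      forall lam,
        U *m map_mx intr (G lam) *m (map_mx Num.conj U)^T =
        diag_mx (\row_i (ratr (Smat lam (e i) / Smat zero8 (e i)) : C)).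

Arguments matches C Z G : clear implicits.

Definition nimless (C : numClosedFieldType) (Z : modinv) : Prop :=
  ~ exists G : 'I_8 -> 'M[int]_(trZ Z), is_nimrep G /\ matches C Z G.

Definition outer (s t : seq nat) : modinv :=
  fun i j => (((i : nat) \in s) && ((j : nat) \in t) : nat).
Definition ent (a b : nat) : modinv :=
  fun i j => (((i : nat) == a) && ((j : nat) == b) : nat).
Definition addZ (Z1 Z2 : modinv) : modinv := fun i j => (Z1 i j + Z2 i j)%N.
Definition sclZ (k : nat) (Z1 : modinv) : modinv := fun i j => (k * Z1 i j)%N.
Definition trpZ (Z1 : modinv) : modinv := fun i j => Z1 j i.

Local Infix "+Z" := addZ (at level 50, left associativity).

Definition Z1 : modinv := outer [:: 0; 1; 3] [:: 0; 1; 3]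
  +Z ent 2 3 +Z ent 3 2 +Z ent 3 3 +Z ent 4 4 +Z ent 5 5.
Definition Z2 : modinv := outer [:: 0; 1; 3] [:: 0; 1; 3]
  +Z ent 2 2 +Z sclZ 2 (ent 3 3) +Z ent 4 4 +Z ent 5 5.
Definition Z3 : modinv := outer [:: 0; 1; 2] [:: 0; 1; 2]
  +Z ent 2 2 +Z ent 2 3 +Z ent 3 2 +Z ent 4 4 +Z ent 5 5.
Definition Z4 : modinv := outer [:: 0; 1; 2] [:: 0; 1; 2]
  +Z sclZ 2 (ent 2 2) +Z ent 3 3 +Z ent 4 4 +Z ent 5 5.
Definition Z21 : modinv := outer [:: 0; 1; 3] [:: 0; 1; 2]
  +Z sclZ 2 (ent 3 2) +Z ent 2 3 +Z ent 4 4 +Z ent 5 5.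
Definition Z12 : modinv := trpZ Z21.
Definition Z61 : modinv := outer [:: 0; 1; 3] [:: 0; 1; 2]
  +Z ent 3 2 +Z ent 2 2 +Z ent 3 3 +Z ent 4 4 +Z ent 5 5.
Definition Z16 : modinv := trpZ Z61.

(* Let G be a nimrep matching Z, diagonalised by a unitary U with eigenvalues
   S_lm / S_0m for m in Exp(Z).  For an integer vector c, P = sum_l c_l G_l has
   eigenvalue sum_l c_l S_lm / S_0m on the m-th eigenvector.  Choose c >= 0 with
   c_0 = 1 whose eigenvalue is S on the vacuum (a simple exponent) and 0 on the rest
   of Exp(Z).  Then P = S v v^* is a symmetric integer matrix of rank one, so its
   diagonal entries are positive, add up to S, and have pairwise products that are
   squares.  For Z(21), Z(12), Z(4) and Z(2) no such diagonal exists.  For the other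
   invariants the diagonal is forced to be constant (for Z(61) and Z(16) after the
   positivity of the projections onto the exponents 2, ..., 5 has cut down the
   possible values), so P is a constant matrix.  The combination Q acting as 9 on
   the eigenvector of the simple exponent 4 and as 0 elsewhere then satisfies
   Q P = 0, i.e. Q has zero row sums, and Q^2 = 9 Q; modulo 2 this makes the
   diagonal of Q vanish, contradicting tr Q = 9. *)

From mathcomp Require Import all_boot all_order all_algebra.
From mathcomp Require Import zify ring.
From Stdlib Require PeanoNat.
Set Implicit Arguments.
Unset Strict Implicit.
Unset Printing Implicit Defensive.
Import Order.TTheory GRing.Theory Num.Theory.

Fixpoint compositions (k s : nat) : seq (seq nat) :=
  if k is k'.+1 then
    flatten [seq [seq v :: p | p <- compositions k' (s - v)] | v <- iota 1 s]
  else if s is 0 then [:: [::]] else [::].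

Lemma mem_compositions (p : seq nat) :
  all (fun v => 0 < v) p -> p \in compositions (size p) (sumn p).
Proof.
elim: p => [|v p IHp] //= /andP[v_gt0 /IHp p_in].
apply/flatten_mapP; exists v; first by rewrite mem_iota v_gt0 add1n ltnS leq_addr.
by rewrite addKn map_f.
Qed.

Definition is_square (x : nat) : bool := Nat.sqrt x * Nat.sqrt x == x.

Lemma is_square_sqr (r : nat) : is_square (r * r).
Proof. by rewrite /is_square -multE PeanoNat.Nat.sqrt_square. Qed.

Definition pairwise_square (p : seq nat) : bool :=
  all (fun x => all (fun y => is_square (x * y)) p) p.

Definition square_compositions (k s : nat) : seq (seq nat) :=
  [seq p <- compositions k s | pairwise_square p].

Lemma codom_square_compositions k (a : 'I_k -> nat) :
  (forall i, 0 < a i) -> (forall i j, is_square (a i * a j)) ->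
  codom a \in square_compositions k (\sum_i a i).
Proof.
move=> a_gt0 a_sq; rewrite mem_filter; apply/andP; split.
  by apply/allP=> _ /codomP[i ->]; apply/allP=> _ /codomP[j ->]; apply: a_sq.
have := @mem_compositions (codom a).
rewrite size_codom card_ord /codom /image_mem sumnE big_map big_enum; apply.
by apply/allP=> _ /mapP[i _ ->].
Qed.

Local Open Scope ring_scope.

Lemma Z2_mulxx (x : 'Z_2) : x * x = x.
Proof. by case: x => [[|[|//]] ?]; apply/val_inj. Qed.

Lemma mxtrace_Z2_idem_zero_rowsums n (Q : 'M['Z_2]_n) :
  Q^T = Q -> Q *m Q = Q -> (forall a, \sum_j Q a j = 0) -> \tr Q = 0.
Proof.
move=> Q_sym Q_idem Q_rows; apply: big1 => a _.
rewrite -Q_idem mxE -[RHS](Q_rows a); apply: eq_bigr => j _.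
by rewrite -{2}Q_sym mxE Z2_mulxx.
Qed.

Lemma map_intr_mx_inj (C : numClosedFieldType) m n :
  injective (map_mx (intr : int -> C) : 'M_(m, n) -> 'M_(m, n)).
Proof.
move=> A B /matrixP AB; apply/matrixP=> i j.
by have := AB i j; rewrite !mxE; apply: intr_inj.
Qed.

(** * Unitary conjugates of diagonal matrices *)

Local Open Scope sesquilinear_scope.

Section UnitaryConjugation.
Variables (C : numClosedFieldType) (n : nat) (U : 'M[C]_n).
Hypothesis U_unitary : U \is unitarymx.

Definition udiag (d : 'I_n -> C) : 'M[C]_n := U ^t* *m diag_mx (\row_i d i) *m U.

Lemma eq_udiag d d' : d =1 d' -> udiag d = udiag d'.
Proof.
by move=> dd'; rewrite /udiag; congr (_ *m diag_mx _ *m _); apply/rowP=> i; rewrite !mxE.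
Qed.

Lemma udiagE d a b : udiag d a b = \sum_i (U i a)^* * d i * U i b.
Proof. by rewrite /udiag mul_mx_diag mxE; apply: eq_bigr => i _; rewrite !mxE. Qed.

Lemma udiag_sum (L : Type) (r : seq L) (c : L -> C) (d : L -> 'I_n -> C) :
  udiag (fun i => \sum_(l <- r) c l * d l i) = \sum_(l <- r) c l *: udiag (d l).
Proof.
apply/matrixP=> a b; rewrite udiagE summxE.
under [RHS]eq_bigr do rewrite mxE udiagE mulr_sumr.
rewrite exchange_big; apply: eq_bigr => i _.
by rewrite mulr_sumr mulr_suml; apply: eq_bigr => l _; ring.
Qed.

Lemma udiagZ x d : x *: udiag d = udiag (fun i => x * d i).
Proof.
apply/matrixP=> a b; rewrite mxE !udiagE mulr_sumr.
by apply: eq_bigr => i _; ring.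
Qed.

Lemma udiagM d d' : udiag d *m udiag d' = udiag (fun i => d i * d' i).
Proof.
rewrite /udiag -!mulmxA (mulmxA U) (unitarymxP U_unitary) mul1mx.
rewrite [diag_mx _ *m (_ *m U)]mulmxA mulmx_diag.
by congr (_ *m (diag_mx _ *m _)); apply/rowP=> i; rewrite !mxE.
Qed.

Lemma mxtrace_udiag d : \tr (udiag d) = \sum_i d i.
Proof.
rewrite /udiag mxtrace_mulC mulmxA (unitarymxP U_unitary) mul1mx mxtrace_diag.
by apply: eq_bigr => i _; rewrite mxE.
Qed.

Lemma udiag_diag_ge0 d a : (forall i, 0 <= d i) -> 0 <= udiag d a a.
Proof.
move=> d_ge0; rewrite udiagE; apply: sumr_ge0 => i _.
by rewrite mulrAC [_^* * _]mulrC mulr_ge0 // mul_conjC_ge0.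
Qed.

Lemma udiag_rank1 d i0 a b : (forall i, i != i0 -> d i = 0) ->
  udiag d a a * udiag d b b = udiag d a b * udiag d b a.
Proof.
move=> d0; have E x y : udiag d x y = (U i0 x)^* * d i0 * U i0 y.
  rewrite udiagE (bigD1 i0) //= big1 ?addr0 // => i /d0 ->.
  by rewrite mulr0 mul0r.
by rewrite !E; ring.
Qed.

End UnitaryConjugation.

Definition S6 (l m : 'I_8) : int := nth 0 (nth [::] S6_table l) m.

Lemma S6_0_neq0 m : S6 zero8 m != 0.
Proof. by case: m => [[|[|[|[|[|[|[|[|//]]]]]]]]]. Qed.

Lemma Smat_ratio (F : numFieldType) l m :
  ratr (Smat l m / Smat zero8 m) = (S6 l m)%:~R / (S6 zero8 m)%:~R :> F.
Proof.
rewrite /Smat !fmorph_div !rmorph_int rmorph_nat -/(S6 l m) -/(S6 zero8 m).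
have S60_neq0 : (S6 zero8 m)%:~R != 0 :> F by rewrite intr_eq0 S6_0_neq0.
have six_neq0 : 6 != 0 :> F by rewrite pnatr_eq0.
by field.
Qed.

(* [\sum_l c_l G_l] acts by [k m] on the eigenvector of each exponent [m] of [Z]:
   the eigenvalue [\sum_l c_l S_lm / S_0m] with its denominator cleared. *)
Definition spectrum_on (Z : modinv) (c k : 'I_8 -> int) : Prop :=
  forall m, (Z m m != 0)%N -> \sum_l c l * S6 l m = k m * S6 zero8 m.

Lemma spectrum_ratio (F : numFieldType) (c : 'I_8 -> int) m k :
  \sum_l c l * S6 l m = k * S6 zero8 m ->
  \sum_l (c l)%:~R * ((S6 l m)%:~R / (S6 zero8 m)%:~R) = k%:~R :> F.
Proof.
move=> ck; under eq_bigr do rewrite mulrA -intrM.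
by rewrite -mulr_suml -rmorph_sum ck rmorphM /= mulfK // intr_eq0 S6_0_neq0.
Qed.

Definition delta_at (m0 : 'I_8) (x : int) (m : 'I_8) : int := if m == m0 then x else 0.

Definition vec8 (s : seq int) (l : 'I_8) : int := nth 0 s l.

Lemma vec8_ge0 s l : all (fun x => 0 <= x) s -> 0 <= vec8 s l.
Proof.
move=> s_ge0; rewrite /vec8; case: (ltnP l (size s)) => [lt_ls|le_sl].
  exact: (allP s_ge0) (mem_nth 0 lt_ls).
by rewrite nth_default.
Qed.

Ltac spectrum_by_computation :=
  move=> [[|[|[|[|[|[|[|[|//]]]]]]]] ?]; rewrite !big_ord_recl big_ord0;
  by vm_compute.

Lemma sum_ord8 (R : nmodType) (F : 'I_8 -> R) :
  \sum_l F l = F ord0 + F (@Ordinal 8 1 isT) + F (@Ordinal 8 2 isT)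
    + F (@Ordinal 8 3 isT) + F (@Ordinal 8 4 isT) + F (@Ordinal 8 5 isT)
    + F (@Ordinal 8 6 isT) + F (@Ordinal 8 7 isT).
Proof.
rewrite !big_ord_recl big_ord0 addr0 !addrA.
by repeat congr (_ + _); congr F; apply: val_inj.
Qed.

(* Halves of the columns 2, ..., 5 of [6 S]. *)
Definition half_col2 := vec8 [:: 1; 1; 2; -1; -1; -1; 0; 0].
Definition half_col3 := vec8 [:: 1; 1; -1; 2; -1; -1; 0; 0].
Definition half_col4 := vec8 [:: 1; 1; -1; -1; -1; 2; 0; 0].
Definition half_col5 := vec8 [:: 1; 1; -1; -1; 2; -1; 0; 0].

Definition o2 : 'I_8 := @Ordinal 8 2 isT.
Definition o3 : 'I_8 := @Ordinal 8 3 isT.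
Definition o4 : 'I_8 := @Ordinal 8 4 isT.
Definition o5 : 'I_8 := @Ordinal 8 5 isT.

Lemma spectrum_half_col2 Z : spectrum_on Z half_col2 (delta_at o2 9).
Proof. spectrum_by_computation. Qed.
Lemma spectrum_half_col3 Z : spectrum_on Z half_col3 (delta_at o3 9).
Proof. spectrum_by_computation. Qed.
Lemma spectrum_half_col4 Z : spectrum_on Z half_col4 (delta_at o4 9).
Proof. spectrum_by_computation. Qed.
Lemma spectrum_half_col5 Z : spectrum_on Z half_col5 (delta_at o5 9).
Proof. spectrum_by_computation. Qed.

(* Each inequality reads [3 g_j >= s - 2] with [s = g2 + g3 + g4 + g5]; this leaves
   [s] in {0, 1, 2, 4, 5, 8}. *)
Lemma psd_diag_values (g2 g3 g4 g5 : int) :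
  0 <= g2 -> 0 <= g3 -> 0 <= g4 -> 0 <= g5 ->
  0 <= 2 + 2 * g2 - g3 - g4 - g5 -> 0 <= 2 - g2 + 2 * g3 - g4 - g5 ->
  0 <= 2 - g2 - g3 + 2 * g4 - g5 -> 0 <= 2 - g2 - g3 - g4 + 2 * g5 ->
  `|(1 + g2 + g3 + g4 + g5)%R|%N \in [:: 1; 2; 3; 5; 6; 9]%N.
Proof. by move=> *; rewrite !inE; lia. Qed.

Definition vac026 := vec8 [:: 1; 0; 1; 0; 0; 0; 1; 0].
Definition vac036 := vec8 [:: 1; 0; 0; 1; 0; 0; 1; 0].
Definition vac023456 := vec8 [:: 1; 0; 1; 1; 1; 1; 3; 0].

Lemma spectrum_vac023456_Z61 : spectrum_on Z61 vac023456 (delta_at zero8 18).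
Proof. spectrum_by_computation. Qed.

Lemma spectrum_G0_Z61 : spectrum_on Z61 (vec8 [:: 1]) (fun _ => 1).
Proof. spectrum_by_computation. Qed.

Lemma spectrum_G1_Z61 : spectrum_on Z61 (vec8 [:: 0; 1]) (fun _ => 1).
Proof. spectrum_by_computation. Qed.

Lemma spectrum_G6_Z61 : spectrum_on Z61 (vec8 [:: 0; 0; 0; 0; 0; 0; 1]) (vec8 [:: 3; -3]).
Proof. spectrum_by_computation. Qed.

(** * Nimreps matching a modular invariant *)

Section MatchingNimrep.
Variables (C : numClosedFieldType) (Z : modinv).
Local Notation n := (trZ Z).
Variables (G : 'I_8 -> 'M[int]_n) (e : 'I_n -> 'I_8) (U : 'M[C]_n).
Hypothesis G_nimrep : is_nimrep G.
Hypothesis e_count : forall mu, #|[pred i | e i == mu]| = Z mu mu.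
Hypothesis U_unitary : U *m (map_mx Num.conj U)^T = 1%:M.
Hypothesis G_diag : forall lam,
  U *m map_mx intr (G lam) *m (map_mx Num.conj U)^T =
  diag_mx (\row_i (ratr (Smat lam (e i) / Smat zero8 (e i)) : C)).

Lemma U_unitarymx : U \is unitarymx.
Proof. by apply/unitarymxP; rewrite -map_trmx. Qed.

Lemma e_in_Exp i : (Z (e i) (e i) != 0)%N.
Proof. by rewrite -e_count -lt0n; apply/card_gt0P; exists i; rewrite inE. Qed.

Lemma sum_over_Exp (f : 'I_8 -> int) : \sum_i f (e i) = \sum_m f m * (Z m m)%:R.
Proof.
rewrite (partition_big e predT) //; apply: eq_bigr => m _.
rewrite (eq_bigr (fun _ => f m)) => [|i /eqP-> //].
by rewrite sumr_const -e_count mulr_natr.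
Qed.

Lemma G_udiag l :
  map_mx intr (G l) = udiag U (fun i => ratr (Smat l (e i) / Smat zero8 (e i))).
Proof.
have UtU : U ^t* *m U = 1%:M by apply: mulmx1C; apply/unitarymxP/U_unitarymx.
rewrite /udiag -G_diag map_trmx.
by rewrite !mulmxA UtU mul1mx -mulmxA UtU mulmx1.
Qed.

Definition comb (c : 'I_8 -> int) : 'M[int]_n := \sum_l c l *: G l.

Lemma combE c a b : comb c a b = \sum_l c l * G l a b.
Proof. by rewrite summxE; apply: eq_bigr => l _; rewrite mxE. Qed.

Lemma comb_ge0 c a b : (forall l, 0 <= c l) -> 0 <= comb c a b.
Proof.
case: G_nimrep => G_ge0 _ _ _ c_ge0; rewrite combE.
by apply: sumr_ge0 => l _; apply: mulr_ge0.
Qed.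

Lemma comb_diag_ge1 c a : c zero8 = 1 -> (forall l, 0 <= c l) -> 1 <= comb c a a.
Proof.
case: G_nimrep => G_ge0 G0 _ _ c0 c_ge0.
rewrite combE (bigD1 zero8) //= c0 G0 mxE eqxx mul1r lerDl.
by apply: sumr_ge0 => l _; apply: mulr_ge0.
Qed.

Lemma comb_tr c : (comb c)^T = comb c.
Proof.
case: G_nimrep => _ _ G_sym _; apply/matrixP=> a b; rewrite mxE !combE.
by apply: eq_bigr => l _; rewrite [G l in LHS](G_sym l) mxE.
Qed.

Lemma map_comb c k : spectrum_on Z c k ->
  map_mx intr (comb c) = udiag U (fun i => (k (e i))%:~R).
Proof.
move=> ck; rewrite map_mx_sum.
under eq_bigr do rewrite map_mxZ G_udiag.
rewrite -udiag_sum; apply: eq_udiag => i.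
under eq_bigr do rewrite Smat_ratio.
exact/spectrum_ratio/ck/e_in_Exp.
Qed.

Lemma intr_comb c k a b : spectrum_on Z c k ->
  (comb c a b)%:~R = udiag U (fun i => (k (e i))%:~R) a b :> C.
Proof. by move=> ck; rewrite -(map_comb ck) mxE. Qed.

Lemma comb_eq c c' k : spectrum_on Z c k -> spectrum_on Z c' k -> comb c = comb c'.
Proof.
by move=> ck c'k; apply: (@map_intr_mx_inj C); rewrite (map_comb ck) (map_comb c'k).
Qed.

Lemma comb_mul c c' c'' k k' k'' q :
  spectrum_on Z c k -> spectrum_on Z c' k' -> spectrum_on Z c'' k'' ->
  (forall m, (Z m m != 0)%N -> k m * k' m = q * k'' m) ->
  comb c *m comb c' = q *: comb c''.
Proof.
move=> ck c'k c''k'' kk'; apply: (@map_intr_mx_inj C).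
rewrite map_mxM map_mxZ (map_comb ck) (map_comb c'k) (map_comb c''k'').
rewrite udiagM ?U_unitarymx //.
rewrite udiagZ; apply: eq_udiag => i.
by rewrite -!intrM kk' ?e_in_Exp.
Qed.

Lemma mxtrace_comb c k : spectrum_on Z c k -> \tr (comb c) = \sum_m k m * (Z m m)%:R.
Proof.
move=> ck; rewrite -sum_over_Exp; apply: (@intr_inj C).
rewrite -trace_map_mx (map_comb ck) mxtrace_udiag ?U_unitarymx //.
by rewrite rmorph_sum.
Qed.

Lemma comb_diag_ge0 c k a : spectrum_on Z c k -> (forall m, 0 <= k m) -> 0 <= comb c a a.
Proof.
move=> ck k_ge0; rewrite -(ler0z C) (intr_comb _ _ ck).
by apply: udiag_diag_ge0 => i; rewrite ler0z.
Qed.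

Lemma comb_rank1 c m0 x a b : Z m0 m0 = 1%N -> spectrum_on Z c (delta_at m0 x) ->
  comb c a a * comb c b b = comb c a b ^+ 2.
Proof.
move=> Zm0 ck.
have [i0 e_i0] : exists i0, forall i, (e i == m0) = (i == i0).
  have /card1P[i0 e_i0] : #|[pred i | e i == m0]| == 1%N by rewrite e_count Zm0.
  by exists i0 => i; have := e_i0 i; rewrite !inE.
apply: (@intr_inj C); rewrite expr2 -{4}comb_tr mxE !rmorphM /=.
rewrite !(intr_comb _ _ ck); apply: (@udiag_rank1 _ _ _ _ i0) => i.
by rewrite /delta_at e_i0 => /negPf->.
Qed.

Lemma mxtrace_comb_delta c m0 x : spectrum_on Z c (delta_at m0 x) ->
  \tr (comb c) = x * (Z m0 m0)%:R.
Proof.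
move=> ck; rewrite (mxtrace_comb ck) (bigD1 m0) //= /delta_at eqxx big1 ?addr0 //.
by move=> m /negPf->; rewrite mul0r.
Qed.

Section PositiveEigenvector.
Variables (c : 'I_8 -> int) (S : nat).
Hypothesis Z00 : Z zero8 zero8 = 1%N.
Hypothesis c0 : c zero8 = 1.
Hypothesis c_ge0 : forall l, 0 <= c l.
Hypothesis c_spec : spectrum_on Z c (delta_at zero8 S).

Lemma comb_diag_gt0 i : 0 < comb c i i.
Proof. exact: lt_le_trans ltr01 (comb_diag_ge1 i c0 c_ge0). Qed.

Lemma comb_diag_square_compositions :
  codom (fun i => `|comb c i i|%N) \in square_compositions n S.
Proof.
have diag_abs i : (`|comb c i i|%N)%:Z = comb c i i.
  by rewrite gez0_abs // ltW // comb_diag_gt0.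
have -> : S = (\sum_i `|comb c i i|%N)%N.
  apply/eqP; rewrite -(eqr_nat int) natr_sum; apply/eqP.
  rewrite (eq_bigr (fun i => comb c i i)) => [|i _]; last by rewrite natz diag_abs.
  by move: (mxtrace_comb_delta c_spec); rewrite /mxtrace Z00 mulr1 natz => ->.
apply: codom_square_compositions => [i|i j].
  by rewrite absz_gt0 gt_eqF // comb_diag_gt0.
by rewrite -abszM (comb_rank1 i j Z00 c_spec) abszX is_square_sqr.
Qed.

Lemma comb_const t : (forall i, comb c i i = t) -> forall a b, comb c a b = t.
Proof.
move=> diag_t a b; apply/eqP; rewrite -(eqrXn2 (_ : 0 < 2)%N) ?comb_ge0 //.
  by rewrite -(comb_rank1 a b Z00 c_spec) !diag_t.
by rewrite -(diag_t a) ltW // comb_diag_gt0.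
Qed.

Lemma comb_diag_not_constant t : Z o4 o4 = 1%N -> ~ (forall i, comb c i i = t).
Proof.
move=> Z44 diag_t.
have n_gt0 : (0 < n)%N by rewrite /trZ (bigD1 zero8) //= Z00.
pose i0 := Ordinal n_gt0.
have t_neq0 : t != 0 by rewrite -(diag_t i0) gt_eqF // comb_diag_gt0.
pose Q := comb half_col4.
have Q_spec := @spectrum_half_col4 Z.
have QP : Q *m comb c = 0 *: comb c.
  apply: (comb_mul Q_spec c_spec c_spec) => m _.
  by rewrite /delta_at mul0r; case: eqP => [->|_]; rewrite ?mul0r.
have QQ : Q *m Q = 9 *: Q.
  apply: (comb_mul Q_spec Q_spec Q_spec) => m _.
  by rewrite /delta_at; case: eqP; rewrite ?mulr0.
have Q_rows a : \sum_j Q a j = 0.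
  move/matrixP: QP => /(_ a i0); rewrite scale0r !mxE.
  under eq_bigr do rewrite (comb_const diag_t).
  by rewrite -mulr_suml => /eqP; rewrite mulf_eq0 (negPf t_neq0) orbF => /eqP.
pose Q2 := map_mx (intr : int -> 'Z_2) Q.
have : \tr Q2 = 0.
  apply: mxtrace_Z2_idem_zero_rowsums.
  - by rewrite map_trmx comb_tr.
  - by rewrite -map_mxM QQ map_mxZ [X in X *: _](_ : _ = 1) ?scale1r //; apply/val_inj.
  - by move=> a; under eq_bigr do rewrite mxE; rewrite -rmorph_sum Q_rows.
by rewrite trace_map_mx (mxtrace_comb_delta Q_spec) Z44.
Qed.

Lemma comb_diag_codom_neq_nseq t : Z o4 o4 = 1%N ->
  codom (fun i => `|comb c i i|%N) != nseq n t.
Proof.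
move=> Z44; apply/eqP => diag_t; apply: (comb_diag_not_constant (t := t) Z44) => i.
have := codom_f (fun i => `|comb c i i|%N) i; rewrite diag_t mem_nseq => /andP[_ /eqP <-].
by rewrite gez0_abs // ltW // comb_diag_gt0.
Qed.

Lemma comb_diag_codom_not_unique t (P : pred nat) : Z o4 o4 = 1%N ->
  (forall i, P `|comb c i i|%N) ->
  [seq p <- square_compositions n S | all P p] != [:: nseq n t].
Proof.
move=> Z44 diag_P; apply/eqP => uniq_t.
have : codom (fun i => `|comb c i i|%N) \in [seq p <- square_compositions n S | all P p].
  rewrite mem_filter comb_diag_square_compositions andbT.
  by apply/allP=> _ /codomP[i ->].
by rewrite uniq_t mem_seq1 (negPf (comb_diag_codom_neq_nseq t Z44)).
Qed.

End PositiveEigenvector.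

Section Z61Diagonal.
Hypothesis Z_diag : forall m, Z m m = Z61 m m.

Lemma spectrum_of_Z61 c k : spectrum_on Z61 c k -> spectrum_on Z c k.
Proof. by move=> ck m; rewrite Z_diag; apply: ck. Qed.

Lemma G1_diag_Z61 i : G (@Ordinal 8 1 isT) i i = 1.
Proof.
case: G_nimrep => _ G0 _ _.
have := comb_eq (spectrum_of_Z61 spectrum_G1_Z61) (spectrum_of_Z61 spectrum_G0_Z61).
move/matrixP/(_ i i); rewrite !combE !sum_ord8 /vec8 /= G0 mxE eqxx; lia.
Qed.

Lemma G6_diag_Z61 i : G (@Ordinal 8 6 isT) i i = 0.
Proof.
pose G6 := vec8 [:: 0; 0; 0; 0; 0; 0; 1].
have G6_ge0 l : 0 <= G6 l by apply: vec8_ge0.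
have tr6 : \tr (comb G6) = 0.
  rewrite (mxtrace_comb (spectrum_of_Z61 spectrum_G6_Z61)).
  under eq_bigr do rewrite Z_diag.
  by rewrite !big_ord_recl big_ord0; vm_compute.
have := psumr_eq0P (fun a _ => comb_ge0 a a G6_ge0) tr6 (i := i) isT.
by rewrite combE sum_ord8 /G6 /vec8 /=; lia.
Qed.

Lemma comb_vac023456_diag_Z61 i :
  `|comb vac023456 i i|%N \in [:: 1; 2; 3; 5; 6; 9]%N.
Proof.
case: G_nimrep => G_ge0 G0 _ _.
have g0 : G ord0 i i = 1 by rewrite G0 mxE eqxx.
have g1 := G1_diag_Z61 i; have g6 := G6_diag_Z61 i.
have psd c j : spectrum_on Z c (delta_at j 9) -> 0 <= comb c i i.
  by move=> cj; apply: (comb_diag_ge0 _ cj) => m; rewrite /delta_at; case: eqP.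
have -> : comb vac023456 i i = 1 + G (@Ordinal 8 2 isT) i i
    + G (@Ordinal 8 3 isT) i i + G (@Ordinal 8 4 isT) i i + G (@Ordinal 8 5 isT) i i.
  by rewrite combE sum_ord8 /vac023456 /vec8 /=; lia.
have := psd _ _ (@spectrum_half_col2 Z); have := psd _ _ (@spectrum_half_col3 Z).
have := psd _ _ (@spectrum_half_col4 Z); have := psd _ _ (@spectrum_half_col5 Z).
rewrite /half_col2 /half_col3 /half_col4 /half_col5 !combE !sum_ord8 /vec8 /= => *.
apply: psd_diag_values; by [apply: G_ge0 | lia].
Qed.

End Z61Diagonal.

End MatchingNimrep.

Section NimlessCriteria.
Variables (C : numClosedFieldType) (Z : modinv) (c : 'I_8 -> int) (S : nat).
Hypothesis Z00 : Z zero8 zero8 = 1%N.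
Hypothesis c0 : c zero8 = 1.
Hypothesis c_ge0 : forall l, 0 <= c l.
Hypothesis c_spec : spectrum_on Z c (delta_at zero8 S).

Lemma nimless_of_no_square_composition :
  square_compositions (trZ Z) S = [::] -> nimless C Z.
Proof.
move=> no_sq [G [G_nimrep [e [e_count [U [U_unitary G_diag]]]]]].
have := comb_diag_square_compositions G_nimrep e_count U_unitary G_diag
  Z00 c0 c_ge0 c_spec.
by rewrite no_sq.
Qed.

Lemma nimless_of_unique_square_composition t : Z o4 o4 = 1%N ->
  square_compositions (trZ Z) S = [:: nseq (trZ Z) t] -> nimless C Z.
Proof.
move=> Z44 sq1 [G [G_nimrep [e [e_count [U [U_unitary G_diag]]]]]].
have := comb_diag_square_compositions G_nimrep e_count U_unitary G_diag
  Z00 c0 c_ge0 c_spec.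
rewrite sq1 mem_seq1 => /eqP diag_t.
have := comb_diag_codom_neq_nseq G_nimrep e_count U_unitary G_diag
  Z00 c0 c_ge0 c_spec t Z44.
by rewrite diag_t eqxx.
Qed.

End NimlessCriteria.

Lemma nimless_of_Z61_diag C Z : (forall m, Z m m = Z61 m m) -> nimless C Z.
Proof.
move=> Z_diag [G [G_nimrep [e [e_count [U [U_unitary G_diag]]]]]].
have trZ6 : trZ Z = 6%N.
  by rewrite /trZ; under eq_bigr do rewrite Z_diag; rewrite !big_ord_recl big_ord0.
have v_ge0 l : 0 <= vac023456 l by apply: vec8_ge0.
have := comb_diag_codom_not_unique G_nimrep e_count U_unitary G_diag (Z_diag zero8)
  erefl v_ge0 (spectrum_of_Z61 Z_diag spectrum_vac023456_Z61) 3 (Z_diag o4)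
  (comb_vac023456_diag_Z61 G_nimrep e_count U_unitary G_diag Z_diag).
by rewrite trZ6 => /eqP; apply; vm_compute.
Qed.

Lemma nimless_Z21 C : nimless C Z21.
Proof.
apply: (@nimless_of_no_square_composition _ _ vac026 6) => //.
- by move=> l; apply: vec8_ge0.
- by spectrum_by_computation.
- by rewrite /trZ !big_ord_recl big_ord0; vm_compute.
Qed.

Lemma nimless_Z12 C : nimless C Z12.
Proof.
apply: (@nimless_of_no_square_composition _ _ vac026 6) => //.
- by move=> l; apply: vec8_ge0.
- by spectrum_by_computation.
- by rewrite /trZ !big_ord_recl big_ord0; vm_compute.
Qed.

Lemma nimless_Z4 C : nimless C Z4.
Proof.
apply: (@nimless_of_no_square_composition _ _ vac023456 18) => //.
- by move=> l; apply: vec8_ge0.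
- by spectrum_by_computation.
- by rewrite /trZ !big_ord_recl big_ord0; vm_compute.
Qed.

Lemma nimless_Z2 C : nimless C Z2.
Proof.
apply: (@nimless_of_no_square_composition _ _ vac023456 18) => //.
- by move=> l; apply: vec8_ge0.
- by spectrum_by_computation.
- by rewrite /trZ !big_ord_recl big_ord0; vm_compute.
Qed.

Lemma nimless_Z3 C : nimless C Z3.
Proof.
apply: (@nimless_of_unique_square_composition _ _ vac036 6 _ _ _ _ 1) => //.
- by move=> l; apply: vec8_ge0.
- by spectrum_by_computation.
- by rewrite /trZ !big_ord_recl big_ord0; vm_compute.
Qed.

Lemma nimless_Z1 C : nimless C Z1.
Proof.
apply: (@nimless_of_unique_square_composition _ _ vac026 6 _ _ _ _ 1) => //.
- by move=> l; apply: vec8_ge0.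
- by spectrum_by_computation.
- by rewrite /trZ !big_ord_recl big_ord0; vm_compute.
Qed.

Theorem proposition6p2 (C : numClosedFieldType) :
  nimless C Z21 /\ nimless C Z61 /\ nimless C Z3 /\ nimless C Z4 /\
  nimless C Z1 /\ nimless C Z12 /\ nimless C Z2 /\ nimless C Z16.
Proof.
do !split; [exact: nimless_Z21 | exact: nimless_of_Z61_diag | exact: nimless_Z3
  | exact: nimless_Z4 | exact: nimless_Z1 | exact: nimless_Z12 | exact: nimless_Z2
  | exact: nimless_of_Z61_diag].
Qed.
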